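(* Let $S$ be a closed session type with $S\neq\mathsf{end}$. Then there is no monitor $M$ that is both sound and complete for $S$; that is, there is no monitor $M$ such that (soundness) for every process $P$, if $\langle P;M\rangle\xRightarrow{t}\langle P';\mathsf{no}_P\rangle$ for some trace $t$ and process $P'$ then $\emptyset\cdot\emptyset\vdash P:S$ is not derivable, and (completeness) for every process $P$, if $\emptyset\cdot\emptyset\vdash P:S$ is not derivable then there exist a trace $t$ and process $P'$ with $\langle P;M\rangle\xRightarrow{t}\langle P';\mathsf{no}_P\rangle$.
   Context: Values $v$ (including tuples), value variables $x$, process variables $X$; $a$ ranges over values and value variables. Boolean predicates $A$ include $\mathsf{tt},\mathsf{ff}$, comparisons, conjunction, negation; $A\Downarrow\mathsf{tt}$ / $A\Downarrow\mathsf{ff}$ denote evaluation; predicates are type-checked by standard rules. Processes: $P,Q ::= \triangleleft \mathtt{l}(a).P \mid \triangleright\{\mathtt{l}_i(x_i).P_i\}_{i\in I} \mid \mu_X.P \mid X \mid \mathsf{if}\ A\ \mathsf{then}\ P\ \mathsf{else}\ Q \mid \mathbf{0}$, guarded recursion. Transitions: $\mu_X.P \xrightarrow{\tau} P[\mu_X.P/X]$; $\triangleleft\mathtt{l}(v).P \xrightarrow{\triangleleft \mathtt{l}(v)} P$; $\triangleright\{\mathtt{l}_i(x_i).P_i\}_{i\in I} \xrightarrow{\triangleright \mathtt{l}_j(v)} P_j[v/x_j]$ for $j\in I$; $\mathsf{if}\ A\ \mathsf{then}\ P\ \mathsf{else}\ Q \xrightarrow{\tau} P$ if $A\Downarrow\mathsf{tt}$,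 $\xrightarrow{\tau} Q$ if $A\Downarrow\mathsf{ff}$. Base types $\mathsf{B} ::= \mathsf{Int}\mid\mathsf{Str}\mid\mathsf{Bool}\mid\dots\mid(\mathsf{B},\mathsf{B})$. Session types $S ::= \oplus\{!\mathtt{l}_i(\mathsf{B}_i).S_i\}_{i\in I} \mid \&\{?\mathtt{l}_i(\mathsf{B}_i).S_i\}_{i\in I} \mid \mathsf{rec}\ X.S \mid X \mid \mathsf{end}$, $I\neq\emptyset$, labels pairwise distinct, guarded recursion; types are equi-recursive ($\mathsf{rec}\ X.S$ identified with its unfolding), so ''$S\neq\mathsf{end}$'' is understood up to this identification. Typing with $\Theta$ (process variables to session types) and $\Gamma$ (value variables to base types): $\Gamma\vdash x:\mathsf{B}$ if $\Gamma(x)=\mathsf{B}$; $\Gamma\vdash v:\mathsf{B}$ if $v\in\mathsf{B}$. (tBra) if for all $i\in I$, $\Theta\cdot\Gamma,x_i:\mathsf{B}_i\vdash P_i:S_i$, then $\Theta\cdot\Gamma\vdash \triangleright\{\mathtt{l}_i(x_i).P_i\}_{i\in I\cup J} : \&\{?\mathtt{l}_i(\mathsf{B}_i).S_i\}_{i\in I}$; (tSel) if some $i\in I$ has $\mathtt{l}=\mathtt{l}_i$, $\Gamma\vdash a:\mathsf{B}_i$, $\Theta\cdot\Gamma\vdash P:S_i$, then $\Theta\cdot\Gamma\vdash \triangleleft\mathtt{l}(a).P : \oplus\{!\mathtt{l}_i(\mathsf{B}_i).S_i\}_{i\in I}$; (tRec) $\Theta,X:S\cdot\Gamma\vdash P:S$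 implies $\Theta\cdot\Gamma\vdash\mu_X.P:S$; (tPVar) $\Theta(X)=S$ implies $\Theta\cdot\Gamma\vdash X:S$; (tIf) $\Gamma\vdash A:\mathsf{Bool}$, $\Theta\cdot\Gamma\vdash P:S$, $\Theta\cdot\Gamma\vdash Q:S$ imply $\Theta\cdot\Gamma\vdash \mathsf{if}\ A\ \mathsf{then}\ P\ \mathsf{else}\ Q:S$; (tNil) $\Theta\cdot\Gamma\vdash\mathbf{0}:\mathsf{end}$. Monitors: $M,N ::= \triangleleft\mathtt{l}(a).M \mid \triangleright\{\mathtt{l}_i(x_i).M_i\}_{i\in I} \mid \blacktriangle\mathtt{l}(a).M \mid \blacktriangledown\{\mathtt{l}_i(x_i).M_i\}_{i\in I} \mid \mu_X.M \mid X \mid \mathsf{if}\ A\ \mathsf{then}\ M\ \mathsf{else}\ N \mid \mathbf{0} \mid \mathsf{no}_P \mid \mathsf{no}_E$ ($\triangleleft,\triangleright$: send to / receive from the monitored process; $\blacktriangle,\blacktriangledown$: send to / receive from the environment). Transitions: $\triangleleft\mathtt{l}(v).M\xrightarrow{\triangleleft\mathtt{l}(v)}M$; $\blacktriangle\mathtt{l}(v).M\xrightarrow{\blacktriangle\mathtt{l}(v)}M$; $\mu_X.M\xrightarrow{\tau}M[\mu_X.M/X]$; $\triangleright\{\mathtt{l}_i(x_i).M_i\}_{i\in I}\xrightarrow{\triangleright\mathtt{l}_j(v)}M_j[v/x_j]$, $\blacktriangledown\{\mathtt{l}_i(x_i).M_i\}_{i\in I}\xrightarrow{\blacktriangledown\mathtt{l}_j(v)}M_j[v/x_j]$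 for $j\in I$; conditionals as for processes; $\triangleright\{\mathtt{l}_i(x_i).M_i\}_{i\in I}\xrightarrow{\triangleright\mathtt{l}(v)}\mathsf{no}_P$ and $\blacktriangledown\{\mathtt{l}_i(x_i).M_i\}_{i\in I}\xrightarrow{\blacktriangledown\mathtt{l}(v)}\mathsf{no}_E$ whenever $\mathtt{l}\neq\mathtt{l}_i$ for all $i\in I$. Composite system $\langle P;M\rangle$: $P\xrightarrow{\triangleleft\mathtt{l}(v)}P'$, $M\xrightarrow{\triangleright\mathtt{l}(v)}M'$ give $\langle P;M\rangle\xrightarrow{\tau}\langle P';M'\rangle$; $P\xrightarrow{\triangleright\mathtt{l}(v)}P'$, $M\xrightarrow{\triangleleft\mathtt{l}(v)}M'$ give $\langle P;M\rangle\xrightarrow{\tau}\langle P';M'\rangle$; $M\xrightarrow{\alpha}M'$ with $\alpha\in\{\blacktriangle\mathtt{l}(v),\blacktriangledown\mathtt{l}(v)\}$ gives $\langle P;M\rangle\xrightarrow{\alpha}\langle P;M'\rangle$; $\tau$-moves of $P$ or $M$ alone lift to $\langle P;M\rangle$. A trace $t$ is a finite sequence of actions $\blacktriangle\mathtt{l}(v),\blacktriangledown\mathtt{l}(v)$; $\xRightarrow{t}$ interleaves $t$ with finitely many $\tau$-transitions. *)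

(* Syntax uses de Bruijn indices for value variables,
   process variables and session-type variables (so that all substitutions
   are capture-avoiding, as in the paper's up-to-alpha convention). *)
From Stdlib Require Import ZArith String List Bool Arith.
Import ListNotations.

Definition label := nat.

Inductive base : Type :=
| BInt | BStr | BBool | BPair (B1 B2 : base).

Inductive value : Type :=
| VInt (z : Z) | VStr (s : string) | VBool (b : bool) | VPair (v1 v2 : value).

Fixpoint value_in (v : value) (B : base) : Prop :=
  match v, B with
  | VInt _, BInt => True
  | VStr _, BStr => True
  | VBool _, BBool => True
  | VPair v1 v2, BPair B1 B2 => value_in v1 B1 /\ value_in v2 B2
  | _, _ => False
  end.

Fixpoint value_eqb (v w : value) : bool :=
  match v, w with
  | VInt a, VInt b => Z.eqb a b
  | VStr a, VStr b => String.eqb a b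
  | VBool a, VBool b => Bool.eqb a b
  | VPair a1 a2, VPair b1 b2 => value_eqb a1 b1 && value_eqb a2 b2
  | _, _ => false
  end.

Inductive vterm : Type := TVal (v : value) | TVar (x : nat).

Inductive pred : Type :=
| ATT | AFF
| AEq (a b : vterm) | ALt (a b : vterm) | ALe (a b : vterm)
| AAnd (A1 A2 : pred) | ANot (A : pred).

Definition vterm_eval (a : vterm) : option value :=
  match a with TVal v => Some v | TVar _ => None end.

(* A evaluates to Some true (A ⇓ tt) or Some false (A ⇓ ff); None = stuck *)
Fixpoint pred_eval (A : pred) : option bool :=
  match A with
  | ATT => Some true
  | AFF => Some false
  | AEq a b => match vterm_eval a, vterm_eval b with
               | Some v, Some w => Some (value_eqb v w) | _, _ => None end
  | ALt a b => match vterm_eval a, vterm_eval b with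
               | Some (VInt x), Some (VInt y) => Some (Z.ltb x y) | _, _ => None end
  | ALe a b => match vterm_eval a, vterm_eval b with
               | Some (VInt x), Some (VInt y) => Some (Z.leb x y) | _, _ => None end
  | AAnd A1 A2 => match pred_eval A1, pred_eval A2 with
                  | Some x, Some y => Some (x && y) | _, _ => None end
  | ANot A => option_map negb (pred_eval A)
  end.

Definition vterm_has_type (G : list base) (a : vterm) (B : base) : Prop :=
  match a with
  | TVal v => value_in v B
  | TVar x => nth_error G x = Some B
  end.

Inductive pred_bool (G : list base) : pred -> Prop :=
| pb_tt : pred_bool G ATT
| pb_ff : pred_bool G AFF
| pb_eq a b B : vterm_has_type G a B -> vterm_has_type G b B -> pred_bool G (AEq a b)
| pb_lt a b : vterm_has_type G a BInt -> vterm_has_type G b BInt -> pred_bool G (ALt a b)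
| pb_le a b : vterm_has_type G a BInt -> vterm_has_type G b BInt -> pred_bool G (ALe a b)
| pb_and A1 A2 : pred_bool G A1 -> pred_bool G A2 -> pred_bool G (AAnd A1 A2)
| pb_not A : pred_bool G A -> pred_bool G (ANot A).

Fixpoint pred_map (f : vterm -> vterm) (A : pred) : pred :=
  match A with
  | ATT => ATT | AFF => AFF
  | AEq a b => AEq (f a) (f b)
  | ALt a b => ALt (f a) (f b)
  | ALe a b => ALe (f a) (f b)
  | AAnd A1 A2 => AAnd (pred_map f A1) (pred_map f A2)
  | ANot A => ANot (pred_map f A)
  end.

Definition vterm_vsubst (k : nat) (v : value) (a : vterm) : vterm :=
  match a with
  | TVal w => TVal w
  | TVar x => if Nat.eqb x k then TVal v
              else if Nat.ltb k x then TVar (Nat.pred x) else TVar x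
  end.

Definition vterm_vshift (c : nat) (a : vterm) : vterm :=
  match a with
  | TVal w => TVal w
  | TVar x => if Nat.leb c x then TVar (S x) else TVar x
  end.

(* PSel l a P        = ◁ l(a).P
   PBra [(l_i,P_i)]  = ▷ {l_i(x_i).P_i}  (x_i is de Bruijn index 0 in P_i)
   PRec P            = μ_X.P              (X is process index 0 in P) *)
Inductive proc : Type :=
| PSel (l : label) (a : vterm) (P : proc)
| PBra (bs : list (label * proc))
| PRec (P : proc)
| PVar (X : nat)
| PIf (A : pred) (P Q : proc)
| PNil.

Fixpoint proc_vshift (c : nat) (P : proc) : proc :=
  match P with
  | PSel l a P => PSel l (vterm_vshift c a) (proc_vshift c P)
  | PBra bs => PBra (map (fun '(l, P') => (l, proc_vshift (S c) P')) bs)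
  | PRec P => PRec (proc_vshift c P)
  | PVar X => PVar X
  | PIf A P Q => PIf (pred_map (vterm_vshift c) A) (proc_vshift c P) (proc_vshift c Q)
  | PNil => PNil
  end.

Fixpoint proc_vsubst (k : nat) (v : value) (P : proc) : proc :=
  match P with
  | PSel l a P => PSel l (vterm_vsubst k v a) (proc_vsubst k v P)
  | PBra bs => PBra (map (fun '(l, P') => (l, proc_vsubst (S k) v P')) bs)
  | PRec P => PRec (proc_vsubst k v P)
  | PVar X => PVar X
  | PIf A P Q => PIf (pred_map (vterm_vsubst k v) A) (proc_vsubst k v P) (proc_vsubst k v Q)
  | PNil => PNil
  end.

Fixpoint proc_pshift (c : nat) (P : proc) : proc :=
  match P with
  | PSel l a P => PSel l a (proc_pshift c P)
  | PBra bs => PBra (map (fun '(l, P') => (l, proc_pshift c P')) bs)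
  | PRec P => PRec (proc_pshift (S c) P)
  | PVar X => if Nat.leb c X then PVar (S X) else PVar X
  | PIf A P Q => PIf A (proc_pshift c P) (proc_pshift c Q)
  | PNil => PNil
  end.

Fixpoint proc_psubst (k : nat) (Q : proc) (P : proc) : proc :=
  match P with
  | PSel l a P => PSel l a (proc_psubst k Q P)
  | PBra bs => PBra (map (fun '(l, P') => (l, proc_psubst k (proc_vshift 0 Q) P')) bs)
  | PRec P => PRec (proc_psubst (S k) (proc_pshift 0 Q) P)
  | PVar X => if Nat.eqb X k then Q
              else if Nat.ltb k X then PVar (Nat.pred X) else PVar X
  | PIf A P1 P2 => PIf A (proc_psubst k Q P1) (proc_psubst k Q P2)
  | PNil => PNil
  end.

Fixpoint proc_guarded_in (k : nat) (P : proc) : Prop :=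
  match P with
  | PSel _ _ _ => True
  | PBra _ => True
  | PRec P => proc_guarded_in (S k) P
  | PVar X => X <> k
  | PIf _ P Q => proc_guarded_in k P /\ proc_guarded_in k Q
  | PNil => True
  end.

Fixpoint proc_wf (P : proc) : Prop :=
  match P with
  | PSel _ _ P => proc_wf P
  | PBra bs => (fix go (bs : list (label * proc)) : Prop :=
                  match bs with
                  | [] => True
                  | (_, P') :: bs' => proc_wf P' /\ go bs'
                  end) bs
  | PRec P => proc_guarded_in 0 P /\ proc_wf P
  | PVar _ => True
  | PIf _ P Q => proc_wf P /\ proc_wf Q
  | PNil => True
  end.

Inductive pact : Type :=
| PaTau
| PaSnd (l : label) (v : value)
| PaRcv (l : label) (v : value).

Inductive proc_step : proc -> pact -> proc -> Prop :=
| ps_rec P : proc_step (PRec P) PaTau (proc_psubst 0 (PRec P) P)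
| ps_sel l v P : proc_step (PSel l (TVal v) P) (PaSnd l v) P
| ps_bra bs l P v : In (l, P) bs -> proc_step (PBra bs) (PaRcv l v) (proc_vsubst 0 v P)
| ps_if_t A P Q : pred_eval A = Some true -> proc_step (PIf A P Q) PaTau P
| ps_if_f A P Q : pred_eval A = Some false -> proc_step (PIf A P Q) PaTau Q.

(* MSndP = ◁ (to process), MRcvP = ▷ (from process),
   MUp = ▲ (to environment), MDown = ▼ (from environment) *)
Inductive mon : Type :=
| MSndP (l : label) (a : vterm) (M : mon)
| MRcvP (bs : list (label * mon))
| MUp (l : label) (a : vterm) (M : mon)
| MDown (bs : list (label * mon))
| MRec (M : mon)
| MVar (X : nat)
| MIf (A : pred) (M N : mon)
| MNil
| MNoP
| MNoE.

Fixpoint mon_vshift (c : nat) (M : mon) : mon :=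
  match M with
  | MSndP l a M => MSndP l (vterm_vshift c a) (mon_vshift c M)
  | MRcvP bs => MRcvP (map (fun '(l, M') => (l, mon_vshift (S c) M')) bs)
  | MUp l a M => MUp l (vterm_vshift c a) (mon_vshift c M)
  | MDown bs => MDown (map (fun '(l, M') => (l, mon_vshift (S c) M')) bs)
  | MRec M => MRec (mon_vshift c M)
  | MVar X => MVar X
  | MIf A M N => MIf (pred_map (vterm_vshift c) A) (mon_vshift c M) (mon_vshift c N)
  | MNil => MNil | MNoP => MNoP | MNoE => MNoE
  end.

Fixpoint mon_vsubst (k : nat) (v : value) (M : mon) : mon :=
  match M with
  | MSndP l a M => MSndP l (vterm_vsubst k v a) (mon_vsubst k v M)
  | MRcvP bs => MRcvP (map (fun '(l, M') => (l, mon_vsubst (S k) v M')) bs)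
  | MUp l a M => MUp l (vterm_vsubst k v a) (mon_vsubst k v M)
  | MDown bs => MDown (map (fun '(l, M') => (l, mon_vsubst (S k) v M')) bs)
  | MRec M => MRec (mon_vsubst k v M)
  | MVar X => MVar X
  | MIf A M N => MIf (pred_map (vterm_vsubst k v) A) (mon_vsubst k v M) (mon_vsubst k v N)
  | MNil => MNil | MNoP => MNoP | MNoE => MNoE
  end.

Fixpoint mon_pshift (c : nat) (M : mon) : mon :=
  match M with
  | MSndP l a M => MSndP l a (mon_pshift c M)
  | MRcvP bs => MRcvP (map (fun '(l, M') => (l, mon_pshift c M')) bs)
  | MUp l a M => MUp l a (mon_pshift c M)
  | MDown bs => MDown (map (fun '(l, M') => (l, mon_pshift c M')) bs)
  | MRec M => MRec (mon_pshift (S c) M)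
  | MVar X => if Nat.leb c X then MVar (S X) else MVar X
  | MIf A M N => MIf A (mon_pshift c M) (mon_pshift c N)
  | MNil => MNil | MNoP => MNoP | MNoE => MNoE
  end.

Fixpoint mon_psubst (k : nat) (Q : mon) (M : mon) : mon :=
  match M with
  | MSndP l a M => MSndP l a (mon_psubst k Q M)
  | MRcvP bs => MRcvP (map (fun '(l, M') => (l, mon_psubst k (mon_vshift 0 Q) M')) bs)
  | MUp l a M => MUp l a (mon_psubst k Q M)
  | MDown bs => MDown (map (fun '(l, M') => (l, mon_psubst k (mon_vshift 0 Q) M')) bs)
  | MRec M => MRec (mon_psubst (S k) (mon_pshift 0 Q) M)
  | MVar X => if Nat.eqb X k then Q
              else if Nat.ltb k X then MVar (Nat.pred X) else MVar X
  | MIf A M1 M2 => MIf A (mon_psubst k Q M1) (mon_psubst k Q M2)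
  | MNil => MNil | MNoP => MNoP | MNoE => MNoE
  end.

Fixpoint mon_guarded_in (k : nat) (M : mon) : Prop :=
  match M with
  | MSndP _ _ _ | MRcvP _ | MUp _ _ _ | MDown _ => True
  | MRec M => mon_guarded_in (S k) M
  | MVar X => X <> k
  | MIf _ M N => mon_guarded_in k M /\ mon_guarded_in k N
  | MNil | MNoP | MNoE => True
  end.

Fixpoint mon_wf (M : mon) : Prop :=
  match M with
  | MSndP _ _ M => mon_wf M
  | MUp _ _ M => mon_wf M
  | MRcvP bs | MDown bs =>
      (fix go (bs : list (label * mon)) : Prop :=
         match bs with
         | [] => True
         | (_, M') :: bs' => mon_wf M' /\ go bs'
         end) bs
  | MRec M => mon_guarded_in 0 M /\ mon_wf M
  | MVar _ => True
  | MIf _ M N => mon_wf M /\ mon_wf N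
  | MNil | MNoP | MNoE => True
  end.

Inductive mact : Type :=
| MaTau
| MaSndP (l : label) (v : value)
| MaRcvP (l : label) (v : value)
| MaUp (l : label) (v : value)
| MaDown (l : label) (v : value).

Inductive mon_step : mon -> mact -> mon -> Prop :=
| ms_sndP l v M : mon_step (MSndP l (TVal v) M) (MaSndP l v) M
| ms_up l v M : mon_step (MUp l (TVal v) M) (MaUp l v) M
| ms_rec M : mon_step (MRec M) MaTau (mon_psubst 0 (MRec M) M)
| ms_rcvP bs l M v : In (l, M) bs -> mon_step (MRcvP bs) (MaRcvP l v) (mon_vsubst 0 v M)
| ms_down bs l M v : In (l, M) bs -> mon_step (MDown bs) (MaDown l v) (mon_vsubst 0 v M)
| ms_if_t A M N : pred_eval A = Some true -> mon_step (MIf A M N) MaTau M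
| ms_if_f A M N : pred_eval A = Some false -> mon_step (MIf A M N) MaTau N
| ms_rcvP_fail bs l v : ~ In l (map fst bs) -> mon_step (MRcvP bs) (MaRcvP l v) MNoP
| ms_down_fail bs l v : ~ In l (map fst bs) -> mon_step (MDown bs) (MaDown l v) MNoE.

Inductive ext_act : Type :=
| EUp (l : label) (v : value)
| EDown (l : label) (v : value).

Inductive sys_act : Type := STau | SExt (e : ext_act).

Inductive sys : Type := Sys (P : proc) (M : mon).

Inductive sys_step : sys -> sys_act -> sys -> Prop :=
| ss_p2m P P' M M' l v :
    proc_step P (PaSnd l v) P' -> mon_step M (MaRcvP l v) M' ->
    sys_step (Sys P M) STau (Sys P' M')
| ss_m2p P P' M M' l v :
    proc_step P (PaRcv l v) P' -> mon_step M (MaSndP l v) M' ->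
    sys_step (Sys P M) STau (Sys P' M')
| ss_up P M M' l v :
    mon_step M (MaUp l v) M' -> sys_step (Sys P M) (SExt (EUp l v)) (Sys P M')
| ss_down P M M' l v :
    mon_step M (MaDown l v) M' -> sys_step (Sys P M) (SExt (EDown l v)) (Sys P M')
| ss_tauP P P' M : proc_step P PaTau P' -> sys_step (Sys P M) STau (Sys P' M)
| ss_tauM P M M' : mon_step M MaTau M' -> sys_step (Sys P M) STau (Sys P M').

Inductive sys_weak : sys -> list ext_act -> sys -> Prop :=
| sw_refl s : sys_weak s [] s
| sw_tau s s1 t s2 : sys_step s STau s1 -> sys_weak s1 t s2 -> sys_weak s t s2
| sw_ext s e s1 t s2 : sys_step s (SExt e) s1 -> sys_weak s1 t s2 -> sys_weak s (e :: t) s2.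

(* STSel [(l_i,B_i,S_i)] = ⊕{!l_i(B_i).S_i},  STBra = &{?l_i(B_i).S_i},
   STRec T0 = rec X.T0 (X is index 0 in T0) *)
Inductive stype : Type :=
| STSel (bs : list (label * base * stype))
| STBra (bs : list (label * base * stype))
| STRec (T0 : stype)
| STVar (X : nat)
| STEnd.

Fixpoint st_shift (c : nat) (T0 : stype) : stype :=
  match T0 with
  | STSel bs => STSel (map (fun '(l, B, T1) => (l, B, st_shift c T1)) bs)
  | STBra bs => STBra (map (fun '(l, B, T1) => (l, B, st_shift c T1)) bs)
  | STRec T0 => STRec (st_shift (Datatypes.S c) T0)
  | STVar X => if Nat.leb c X then STVar (Datatypes.S X) else STVar X
  | STEnd => STEnd
  end.

Fixpoint st_subst (k : nat) (U : stype) (T0 : stype) : stype :=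
  match T0 with
  | STSel bs => STSel (map (fun '(l, B, T1) => (l, B, st_subst k U T1)) bs)
  | STBra bs => STBra (map (fun '(l, B, T1) => (l, B, st_subst k U T1)) bs)
  | STRec T0 => STRec (st_subst (Datatypes.S k) (st_shift 0 U) T0)
  | STVar X => if Nat.eqb X k then U
               else if Nat.ltb k X then STVar (Nat.pred X) else STVar X
  | STEnd => STEnd
  end.

Fixpoint st_closed_at (n : nat) (T0 : stype) : Prop :=
  match T0 with
  | STSel bs | STBra bs =>
      (fix go (bs : list (label * base * stype)) : Prop :=
         match bs with
         | [] => True
         | (_, _, T1) :: bs' => st_closed_at n T1 /\ go bs'
         end) bs
  | STRec T0 => st_closed_at (Datatypes.S n) T0
  | STVar X => X < n
  | STEnd => True
  end.

Definition st_closed (T0 : stype) : Prop := st_closed_at 0 T0.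

Fixpoint st_guarded_in (k : nat) (T0 : stype) : Prop :=
  match T0 with
  | STSel _ | STBra _ => True
  | STRec T0 => st_guarded_in (Datatypes.S k) T0
  | STVar X => X <> k
  | STEnd => True
  end.

Fixpoint st_wf (T0 : stype) : Prop :=
  match T0 with
  | STSel bs | STBra bs =>
      bs <> [] /\ NoDup (map (fun '(l, _, _) => l) bs) /\
      (fix go (bs : list (label * base * stype)) : Prop :=
         match bs with
         | [] => True
         | (_, _, T1) :: bs' => st_wf T1 /\ go bs'
         end) bs
  | STRec T0 => st_guarded_in 0 T0 /\ st_wf T0
  | STVar _ => True
  | STEnd => True
  end.

Inductive st_unf : stype -> stype -> Prop :=
| unf_sel bs : st_unf (STSel bs) (STSel bs)
| unf_bra bs : st_unf (STBra bs) (STBra bs)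
| unf_var X : st_unf (STVar X) (STVar X)
| unf_end : st_unf STEnd STEnd
| unf_rec T0 H : st_unf (st_subst 0 (STRec T0) T0) H -> st_unf (STRec T0) H.

(* equi-recursive type identification: equality of the infinite unfoldings *)
CoInductive st_eq : stype -> stype -> Prop :=
| steq_end T0 T : st_unf T0 STEnd -> st_unf T STEnd -> st_eq T0 T
| steq_var T0 T X : st_unf T0 (STVar X) -> st_unf T (STVar X) -> st_eq T0 T
| steq_sel T0 T bs cs :
    st_unf T0 (STSel bs) -> st_unf T (STSel cs) ->
    (forall l B T1, In (l, B, T1) bs -> exists T', In (l, B, T') cs /\ st_eq T1 T') ->
    (forall l B T', In (l, B, T') cs -> exists T1, In (l, B, T1) bs /\ st_eq T1 T') ->
    st_eq T0 T
| steq_bra T0 T bs cs :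
    st_unf T0 (STBra bs) -> st_unf T (STBra cs) ->
    (forall l B T1, In (l, B, T1) bs -> exists T', In (l, B, T') cs /\ st_eq T1 T') ->
    (forall l B T', In (l, B, T') cs -> exists T1, In (l, B, T1) bs /\ st_eq T1 T') ->
    st_eq T0 T.

Inductive typed : list stype -> list base -> proc -> stype -> Prop :=
| t_bra Th G pbs tbs :
    (forall l B T0, In (l, B, T0) tbs ->
       exists P, In (l, P) pbs /\ typed Th (B :: G) P T0) ->
    typed Th G (PBra pbs) (STBra tbs)
| t_sel Th G l a P tbs B T0 :
    In (l, B, T0) tbs -> vterm_has_type G a B -> typed Th G P T0 ->
    typed Th G (PSel l a P) (STSel tbs)
| t_rec Th G P T0 : typed (T0 :: Th) G P T0 -> typed Th G (PRec P) T0
| t_pvar Th G X T0 : nth_error Th X = Some T0 -> typed Th G (PVar X) T0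
| t_if Th G A P Q T0 :
    pred_bool G A -> typed Th G P T0 -> typed Th G Q T0 -> typed Th G (PIf A P Q) T0
| t_nil Th G : typed Th G PNil STEnd
| t_eq Th G P T0 T1 : typed Th G P T0 -> st_eq T0 T1 -> typed Th G P T1.

Definition flags (M : mon) (P : proc) : Prop :=
  exists (t : list ext_act) (P' : proc), sys_weak (Sys P M) t (Sys P' MNoP).

Definition mon_sound (M : mon) (S : stype) : Prop :=
  forall P : proc, proc_wf P -> flags M P -> ~ typed [] [] P S.

Definition mon_complete (M : mon) (S : stype) : Prop :=
  forall P : proc, proc_wf P -> ~ typed [] [] P S -> flags M P.

(* The inactive process [PNil] is ill-typed for any [S] other than [end], so a
   complete monitor must flag it.  Since [PNil] never moves, the flagging run
   consists of silent and external steps of the monitor alone, and it can be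
   replayed next to any process, in particular next to a process that is
   well-typed for [S] (follow the first branch of every selection and every
   branch of every branching).  A sound monitor cannot flag that process.

   Typing this process at [rec X.T] requires [T[rec X.T/X]] and [rec X.T] to be
   equal up to unfolding.  For closed well-formed types this holds
   coinductively, because unfolding terminates: by guardedness each unfolding
   removes one leading [rec] binder, and it preserves closedness and
   well-formedness. *)

From Stdlib Require Import ZArith String List Lia.
Import ListNotations.

Definition stype_nested_ind (P : stype -> Prop)
  (HSel : forall bs, Forall (fun b => P (snd b)) bs -> P (STSel bs))
  (HBra : forall bs, Forall (fun b => P (snd b)) bs -> P (STBra bs))
  (HRec : forall T, P T -> P (STRec T))
  (HVar : forall X, P (STVar X))
  (HEnd : P STEnd) : forall T, P T :=
  fix f T := match T as T0 return P T0 with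
  | STSel bs => HSel bs ((fix g (bs : list (label * base * stype)) :=
        match bs return Forall (fun b => P (snd b)) bs with
        | [] => Forall_nil _
        | (l, B, T1) :: bs' => Forall_cons (l, B, T1) (f T1) (g bs')
        end) bs)
  | STBra bs => HBra bs ((fix g (bs : list (label * base * stype)) :=
        match bs return Forall (fun b => P (snd b)) bs with
        | [] => Forall_nil _
        | (l, B, T1) :: bs' => Forall_cons (l, B, T1) (f T1) (g bs')
        end) bs)
  | STRec T => HRec T (f T)
  | STVar X => HVar X
  | STEnd => HEnd
  end.

Lemma st_closed_at_STSel n bs :
  st_closed_at n (STSel bs) <-> Forall (fun b => st_closed_at n (snd b)) bs.
Proof.
  induction bs as [|[[l B] T] bs IH]; simpl in *; [split; auto|].
  rewrite Forall_cons_iff, IH; reflexivity.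
Qed.

Lemma st_closed_at_STBra n bs :
  st_closed_at n (STBra bs) <-> Forall (fun b => st_closed_at n (snd b)) bs.
Proof. exact (st_closed_at_STSel n bs). Qed.

Lemma st_wf_STSel bs :
  st_wf (STSel bs) <->
  bs <> [] /\ NoDup (map (fun '(l, _, _) => l) bs) /\ Forall (fun b => st_wf (snd b)) bs.
Proof.
  simpl; apply and_iff_compat_l, and_iff_compat_l.
  induction bs as [|[[l B] T] bs IH]; simpl; [split; auto|].
  rewrite Forall_cons_iff, IH; reflexivity.
Qed.

Lemma st_wf_STBra bs :
  st_wf (STBra bs) <->
  bs <> [] /\ NoDup (map (fun '(l, _, _) => l) bs) /\ Forall (fun b => st_wf (snd b)) bs.
Proof. exact (st_wf_STSel bs). Qed.

Section MapBranches.
Variable f : stype -> stype.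

Lemma map_branches_id (bs : list (label * base * stype)) :
  Forall (fun b => f (snd b) = snd b) bs -> map (fun '(l, B, T) => (l, B, f T)) bs = bs.
Proof. induction 1 as [|[[l B] T] bs E _ IH]; simpl in *; congruence. Qed.

Lemma map_branches_comp (g h : stype -> stype) (bs : list (label * base * stype)) :
  Forall (fun b => f (g (snd b)) = h (snd b)) bs ->
  map (fun '(l, B, T) => (l, B, f T)) (map (fun '(l, B, T) => (l, B, g T)) bs)
  = map (fun '(l, B, T) => (l, B, h T)) bs.
Proof. induction 1 as [|[[l B] T] bs E _ IH]; simpl in *; congruence. Qed.

Lemma Forall_map_branches (P : stype -> Prop) (bs : list (label * base * stype)) :
  Forall (fun b => P (f (snd b))) bs ->
  Forall (fun b => P (snd b)) (map (fun '(l, B, T) => (l, B, f T)) bs).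
Proof. induction 1 as [|[[l B] T] bs]; simpl in *; auto. Qed.

Lemma map_branches_labels (bs : list (label * base * stype)) :
  map (fun '(l, _, _) => l) (map (fun '(l, B, T) => (l, B, f T)) bs)
  = map (fun '(l, _, _) => l) bs.
Proof. induction bs as [|[[l B] T] bs IH]; simpl; congruence. Qed.

End MapBranches.

Lemma nth_Forall {A} (P : A -> Prop) (r : list A) (i : nat) (d : A) :
  Forall P r -> P d -> P (nth i r d).
Proof. intros Hr Hd; revert i; induction Hr; intros [|i]; simpl; auto. Qed.

Lemma st_closed_at_mono : forall T n m, st_closed_at n T -> n <= m -> st_closed_at m T.
Proof.
  induction T using stype_nested_ind; intros n m Hc Hle; simpl in *; try lia; eauto.
  - apply st_closed_at_STSel in Hc; apply st_closed_at_STSel.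
    rewrite Forall_forall in *; eauto.
  - apply st_closed_at_STBra in Hc; apply st_closed_at_STBra.
    rewrite Forall_forall in *; eauto.
  - apply IHT with (S n); auto; lia.
Qed.

Lemma st_shift_closed : forall T n c, st_closed_at n T -> n <= c -> st_shift c T = T.
Proof.
  induction T using stype_nested_ind; intros n c Hc Hle.
  - apply st_closed_at_STSel in Hc; simpl; f_equal; apply map_branches_id.
    rewrite Forall_forall in *; eauto.
  - apply st_closed_at_STBra in Hc; simpl; f_equal; apply map_branches_id.
    rewrite Forall_forall in *; eauto.
  - simpl in *; f_equal; apply IHT with (S n); auto; lia.
  - simpl in *; destruct (Nat.leb_spec c X); [lia | reflexivity].
  - reflexivity.
Qed.

Lemma st_subst_closed : forall T n k U, st_closed_at n T -> n <= k -> st_subst k U T = T.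
Proof.
  induction T using stype_nested_ind; intros n k U Hc Hle.
  - apply st_closed_at_STSel in Hc; simpl; f_equal; apply map_branches_id.
    rewrite Forall_forall in *; eauto.
  - apply st_closed_at_STBra in Hc; simpl; f_equal; apply map_branches_id.
    rewrite Forall_forall in *; eauto.
  - simpl in *; f_equal; apply IHT with (S n); auto; lia.
  - simpl in *; destruct (Nat.eqb_spec X k), (Nat.ltb_spec k X); lia || reflexivity.
  - reflexivity.
Qed.

Lemma st_guarded_closed : forall T n j, st_closed_at n T -> n <= j -> st_guarded_in j T.
Proof.
  induction T; intros n j Hc Hle; simpl in *; auto.
  - apply IHT with (S n); auto; lia.
  - lia.
Qed.

(* Substitutes [nth (X - k) r] for each variable [X >= k]; variables pointing
   beyond [r] become [STEnd], a junk value ruled out by closedness. *)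
Fixpoint st_close (k : nat) (r : list stype) (T : stype) : stype :=
  match T with
  | STSel bs => STSel (map (fun '(l, B, T1) => (l, B, st_close k r T1)) bs)
  | STBra bs => STBra (map (fun '(l, B, T1) => (l, B, st_close k r T1)) bs)
  | STRec T0 => STRec (st_close (S k) r T0)
  | STVar X => if Nat.ltb X k then STVar X else nth (X - k) r STEnd
  | STEnd => STEnd
  end.

Lemma st_close_closed : forall T k r, st_closed_at (k + length r) T ->
  Forall st_closed r -> st_closed_at k (st_close k r T).
Proof.
  induction T using stype_nested_ind; intros k r Hc Hr.
  - apply st_closed_at_STSel in Hc; apply st_closed_at_STSel, Forall_map_branches.
    rewrite Forall_forall in H, Hc |- *; eauto.
  - apply st_closed_at_STBra in Hc; apply st_closed_at_STBra, Forall_map_branches.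
    rewrite Forall_forall in H, Hc |- *; eauto.
  - apply IHT; auto.
  - simpl in *; destruct (Nat.ltb_spec X k); simpl; [assumption|].
    apply st_closed_at_mono with 0; [apply nth_Forall; simpl; auto | lia].
  - exact I.
Qed.

Lemma st_close_guarded : forall T j k r, j < k -> Forall st_closed r ->
  st_guarded_in j T -> st_guarded_in j (st_close k r T).
Proof.
  induction T; intros j k r Hjk Hr Hg; simpl in *; auto.
  - apply IHT; auto; lia.
  - destruct (Nat.ltb_spec X k); simpl; [assumption|].
    apply st_guarded_closed with 0; [apply nth_Forall; simpl; auto | lia].
Qed.

Lemma st_close_wf : forall T k r, Forall st_closed r -> Forall st_wf r ->
  st_wf T -> st_wf (st_close k r T).
Proof.
  induction T using stype_nested_ind; intros k r Hrc Hrw Hw.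
  - apply st_wf_STSel in Hw as (Hne & Hnd & Hch); apply st_wf_STSel.
    rewrite map_branches_labels; split; [destruct bs; simpl; congruence | split; auto].
    apply Forall_map_branches; rewrite Forall_forall in H, Hch |- *; eauto.
  - apply st_wf_STBra in Hw as (Hne & Hnd & Hch); apply st_wf_STBra.
    rewrite map_branches_labels; split; [destruct bs; simpl; congruence | split; auto].
    apply Forall_map_branches; rewrite Forall_forall in H, Hch |- *; eauto.
  - destruct Hw as [Hg Hw]; split; [apply st_close_guarded; auto; lia | apply IHT; auto].
  - simpl; destruct (Nat.ltb_spec X k); [exact I|].
    apply nth_Forall; simpl; auto.
  - exact I.
Qed.

Lemma st_subst_close : forall T k r U, Forall st_closed r -> st_closed U ->
  st_subst k U (st_close (S k) r T) = st_close k (U :: r) T.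
Proof.
  induction T using stype_nested_ind; intros k r U Hr HU.
  - simpl; f_equal; apply map_branches_comp.
    rewrite Forall_forall in H |- *; eauto.
  - simpl; f_equal; apply map_branches_comp.
    rewrite Forall_forall in H |- *; eauto.
  - simpl; f_equal; rewrite (st_shift_closed U 0 0); auto.
  - cbn [st_close]; destruct (Nat.ltb_spec X (S k)), (Nat.ltb_spec X k); try lia.
    + simpl; destruct (Nat.eqb_spec X k), (Nat.ltb_spec k X); lia || reflexivity.
    + replace X with k by lia; simpl; rewrite Nat.eqb_refl, Nat.sub_diag; reflexivity.
    + replace (X - k) with (S (X - S k)) by lia; simpl.
      apply st_subst_closed with 0; [apply nth_Forall; simpl; auto | lia].
  - reflexivity.
Qed.

Lemma st_close_nil : forall T k, st_closed_at k T -> st_close k [] T = T.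
Proof.
  induction T using stype_nested_ind; intros k Hc.
  - apply st_closed_at_STSel in Hc; simpl; f_equal; apply map_branches_id.
    rewrite Forall_forall in *; eauto.
  - apply st_closed_at_STBra in Hc; simpl; f_equal; apply map_branches_id.
    rewrite Forall_forall in *; eauto.
  - simpl in *; f_equal; auto.
  - simpl in *; destruct (Nat.ltb_spec X k); [reflexivity | lia].
  - reflexivity.
Qed.

Lemma st_unfold_closed_wf T : st_closed (STRec T) -> st_wf (STRec T) ->
  st_closed (st_subst 0 (STRec T) T) /\ st_wf (st_subst 0 (STRec T) T).
Proof.
  intros Hc Hw.
  assert (Hr : Forall st_closed [STRec T]) by auto.
  replace (st_subst 0 (STRec T) T) with (st_close 0 [STRec T] T)
    by (rewrite <- st_subst_close, st_close_nil; auto).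
  split; [apply (st_close_closed T 0 [STRec T]) | apply st_close_wf]; auto.
  apply Hw.
Qed.

Fixpoint st_leading_recs (T : stype) : nat :=
  match T with STRec T0 => S (st_leading_recs T0) | _ => 0 end.

Lemma st_leading_recs_subst T k U :
  st_guarded_in k T -> st_leading_recs (st_subst k U T) = st_leading_recs T.
Proof.
  revert k U; induction T; intros k U Hg; simpl in *; auto.
  destruct (Nat.eqb_spec X k); [contradiction | destruct (Nat.ltb_spec k X); reflexivity].
Qed.

Lemma st_unf_closed_wf : forall T, st_closed T -> st_wf T ->
  exists H, st_unf T H /\ st_closed H /\ st_wf H.
Proof.
  intro T; remember (st_leading_recs T) as n eqn:En; revert T En.
  induction n as [|n IH]; intros [bs|bs|T|X|] En Hc Hw; try discriminate En;
    try (eexists; split; [constructor | split; assumption]).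
  destruct (st_unfold_closed_wf T Hc Hw) as [Hc' Hw'].
  destruct (IH (st_subst 0 (STRec T) T)) as (H & Hu & HH); auto.
  - rewrite st_leading_recs_subst by apply Hw; simpl in En; congruence.
  - exists H; split; [constructor|]; assumption.
Qed.

Lemma st_unf_not_STRec T T0 : ~ st_unf T (STRec T0).
Proof. intro Hu; remember (STRec T0) as H; induction Hu; congruence. Qed.

Lemma st_unf_det T H1 H2 : st_unf T H1 -> st_unf T H2 -> H1 = H2.
Proof. intro Hu; revert H2; induction Hu; intros H2 Hu2; inversion Hu2; auto. Qed.

Lemma st_eq_refl : forall T, st_closed T -> st_wf T -> st_eq T T.
Proof.
  cofix CIH; intros T Hc Hw.
  destruct (st_unf_closed_wf T Hc Hw) as ([bs|bs|T0|X|] & Hu & HcH & HwH).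
  - apply st_closed_at_STSel in HcH; apply st_wf_STSel in HwH as (_ & _ & Hch).
    rewrite Forall_forall in HcH, Hch.
    apply (steq_sel T T bs bs Hu Hu); intros l B T1 Hin; exists T1;
      (split; [exact Hin | apply CIH; [apply (HcH _ Hin) | apply (Hch _ Hin)]]).
  - apply st_closed_at_STBra in HcH; apply st_wf_STBra in HwH as (_ & _ & Hch).
    rewrite Forall_forall in HcH, Hch.
    apply (steq_bra T T bs bs Hu Hu); intros l B T1 Hin; exists T1;
      (split; [exact Hin | apply CIH; [apply (HcH _ Hin) | apply (Hch _ Hin)]]).
  - destruct (st_unf_not_STRec _ _ Hu).
  - inversion HcH.
  - apply steq_end; assumption.
Qed.

Lemma st_eq_unf_r T U U' : st_eq T U -> (forall H, st_unf U H -> st_unf U' H) -> st_eq T U'.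
Proof.
  intros E HU; destruct E;
    [eapply steq_end | eapply steq_var | eapply steq_sel | eapply steq_bra]; eauto.
Qed.

Lemma st_eq_unfold T : st_closed (STRec T) -> st_wf (STRec T) ->
  st_eq (st_subst 0 (STRec T) T) (STRec T).
Proof.
  intros Hc Hw; destruct (st_unfold_closed_wf T Hc Hw) as [Hc' Hw'].
  apply st_eq_unf_r with (st_subst 0 (STRec T) T); [apply st_eq_refl; auto|].
  intros H Hu; constructor; exact Hu.
Qed.

Lemma st_eq_unf_end T U : st_eq T U -> st_unf T STEnd -> st_unf U STEnd.
Proof.
  destruct 1 as [? ? _ HU | ? ? ? HT _ | ? ? ? ? HT _ _ _ | ? ? ? ? HT _ _ _]; intro Hend;
    [exact HU | ..]; pose proof (st_unf_det _ _ _ HT Hend); discriminate.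
Qed.

Fixpoint value_of_base (B : base) : value :=
  match B with
  | BInt => VInt 0 | BStr => VStr EmptyString | BBool => VBool true
  | BPair B1 B2 => VPair (value_of_base B1) (value_of_base B2)
  end.

Lemma value_of_base_in B : value_in (value_of_base B) B.
Proof. induction B; simpl; auto. Qed.

Fixpoint proc_of_stype (T : stype) : proc :=
  match T with
  | STSel [] => PNil
  | STSel ((l, B, T1) :: _) => PSel l (TVal (value_of_base B)) (proc_of_stype T1)
  | STBra bs => PBra (map (fun '(l, _, T1) => (l, proc_of_stype T1)) bs)
  | STRec T0 => PRec (proc_of_stype T0)
  | STVar X => PVar X
  | STEnd => PNil
  end.

Lemma proc_of_stype_guarded T j : st_guarded_in j T -> proc_guarded_in j (proc_of_stype T).
Proof.
  revert j; induction T as [[|[[l B] T1] bs]| | | |]; intros j Hj; simpl in *; auto.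
Qed.

Lemma proc_of_stype_wf : forall T, st_wf T -> proc_wf (proc_of_stype T).
Proof.
  induction T using stype_nested_ind; intros Hw.
  - apply st_wf_STSel in Hw as (_ & _ & Hch).
    destruct bs as [|[[l B] T1] bs]; simpl; [exact I|].
    apply Forall_cons_iff in H as [HT1 _]; apply Forall_cons_iff in Hch as [Hw1 _].
    apply HT1, Hw1.
  - apply st_wf_STBra in Hw as (_ & _ & Hch); simpl.
    induction bs as [|[[l B] T1] bs IH]; simpl; [exact I|].
    apply Forall_cons_iff in H as [HT1 H]; apply Forall_cons_iff in Hch as [Hw1 Hch].
    split; [apply HT1, Hw1 | apply IH; assumption].
  - destruct Hw; split; [apply proc_of_stype_guarded|]; auto.
  - exact I.
  - exact I.
Qed.

Lemma proc_of_stype_typed : forall T r G, Forall st_closed r -> Forall st_wf r ->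
  st_wf T -> st_closed_at (length r) T -> typed r G (proc_of_stype T) (st_close 0 r T).
Proof.
  induction T using stype_nested_ind; intros r G Hrc Hrw Hw Hc.
  - apply st_closed_at_STSel in Hc; apply st_wf_STSel in Hw as (Hne & _ & Hch).
    destruct bs as [|[[l B] T1] bs]; [contradiction|].
    apply Forall_cons_iff in H as [HT1 _]; apply Forall_cons_iff in Hch as [Hw1 _].
    apply Forall_cons_iff in Hc as [Hc1 _].
    simpl; apply t_sel with B (st_close 0 r T1); [left; reflexivity | apply value_of_base_in |].
    apply HT1; assumption.
  - apply st_closed_at_STBra in Hc; apply st_wf_STBra in Hw as (_ & _ & Hch).
    rewrite Forall_forall in H, Hch, Hc.
    apply t_bra; intros l B T' Hin.
    apply in_map_iff in Hin as ([[l' B'] T1] & Heq & Hin); injection Heq as <- <- <-.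
    exists (proc_of_stype T1); split.
    + apply in_map_iff; exists (l', B', T1); auto.
    + apply (H _ Hin); auto.
  - assert (Hc0 : st_closed (STRec (st_close 1 r T)))
      by exact (st_close_closed (STRec T) 0 r Hc Hrc).
    assert (Hw0 : st_wf (STRec (st_close 1 r T)))
      by exact (st_close_wf (STRec T) 0 r Hrc Hrw Hw).
    apply t_rec, t_eq with (st_close 0 (STRec (st_close 1 r T) :: r) T).
    + apply IHT; auto; apply Hw.
    + rewrite <- st_subst_close by auto; apply st_eq_unfold; assumption.
  - simpl in *; rewrite Nat.sub_0_r; apply t_pvar, nth_error_nth'; assumption.
  - apply t_nil.
Qed.

Lemma closed_stype_inhabited S : st_closed S -> st_wf S -> typed [] [] (proc_of_stype S) S.
Proof.
  intros Hc Hw; rewrite <- (st_close_nil S 0) at 2 by exact Hc.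
  apply proc_of_stype_typed; auto.
Qed.

Lemma typed_PNil_unf_end Th G T : typed Th G PNil T -> st_unf T STEnd.
Proof.
  intro Ht; remember PNil as P; induction Ht; try discriminate.
  - constructor.
  - eapply st_eq_unf_end; eauto.
Qed.

Lemma sys_weak_PNil_replay M t Q M' P :
  sys_weak (Sys PNil M) t (Sys Q M') -> sys_weak (Sys P M) t (Sys P M').
Proof.
  intro Hrun; remember (Sys PNil M) as s eqn:Es; remember (Sys Q M') as s' eqn:Es'.
  revert M Es Es'; induction Hrun as [s|s s1 t s2 Hstep Hrun IH|s e s1 t s2 Hstep Hrun IH];
    intros M0 Es Es'; subst.
  - injection Es' as _ ->; constructor.
  - inversion Hstep as [? ? ? ? ? ? Hp|? ? ? ? ? ? Hp| | |? ? ? Hp|]; subst;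
      try solve [inversion Hp].
    eapply sw_tau; [apply ss_tauM; eassumption | apply IH; reflexivity].
  - inversion Hstep; subst; eapply sw_ext;
      [apply ss_up; eassumption | apply IH; reflexivity
      |apply ss_down; eassumption | apply IH; reflexivity].
Qed.

Lemma flags_PNil M P : flags M PNil -> flags M P.
Proof.
  intros (t & Q & Hrun); exists t, P; exact (sys_weak_PNil_replay _ _ _ _ _ Hrun).
Qed.

Theorem mainTheorem4 :
  forall S : stype,
    st_wf S -> st_closed S -> ~ st_eq S STEnd ->
    ~ (exists M : mon, mon_wf M /\ mon_sound M S /\ mon_complete M S).
Proof.
  intros S Hw Hc Hnot_end (M & _ & Hsound & Hcomplete).
  assert (Hnil : ~ typed [] [] PNil S).
  { intro Ht; apply Hnot_end, steq_end; [exact (typed_PNil_unf_end _ _ _ Ht) | constructor]. }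
  apply (Hsound (proc_of_stype S)).
  - apply proc_of_stype_wf, Hw.
  - apply flags_PNil, Hcomplete; [exact I | exact Hnil].
  - apply closed_stype_inhabited; assumption.
Qed.
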